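(* Let $p=(p_1,\dots,p_n)$ be a probability distribution, $m\ge 2$, $\delta>0$, $\eta>0$, and $\varphi_j=2^{-j}$ for $j\ge 0$. For $j=1,\dots,m$ let $\beta_j,\beta_j':[0,1]\to\mathbb{R}$ satisfy, for all $x\in[0,1]$: $\beta_j(x)^2+\beta_j'(x)^2=1$; $\beta_j(x)^2\le\delta^2$ whenever $0\le x\le\varphi_j$; and $\beta_j(x)^2\ge 1-\delta^2$ whenever $2\varphi_j\le x\le 1$. Let $B_j'(x)=\prod_{i=1}^j\beta_i'(x)$ ($B_0'\equiv1$) and $B_j(x)=B_{j-1}'(x)\beta_j(x)$. For $k=1,\dots,m$ let $S_k$ be a real even polynomial with $|S_k(x)|\le 1$ for all $x\in[-1,1]$ and $$\left|S_k(x)-\frac{\sqrt{\log(2/x)}}{2\sqrt{\log(1/\varphi_{k+1})}}\right|\le\eta\quad\text{for all }x\in[\varphi_k,1].$$ Define $v_k=\sum_{i=1}^n p_i S_k(\sqrt{p_i})^2B_k(\sqrt{p_i})^2\log\frac{1}{\varphi_{k+1}}$ and $v=-2+\sum_{k=1}^m 8v_k$. Then $$|v-H(p)|=\tilde{\mathcal{O}}\!\left(m\delta^2+\eta+\frac{n}{2^m}\right),$$ where $H(p)=-\sum_i p_i\log p_i$.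
   Context: All logarithms are base 2. $\tilde{\mathcal{O}}$ hides constant and polylogarithmic factors. *)

From Stdlib Require Import Reals Lra List.
Open Scope R_scope.

Definition log2 (x : R) : R := ln x / ln 2.

Definition phi (j : nat) : R := / (2 ^ j).

Fixpoint sumR (n : nat) (f : nat -> R) : R :=
  match n with O => 0 | S k => sumR k f + f k end.

Fixpoint prod1 (j : nat) (f : nat -> R) : R :=
  match j with O => 1 | S k => prod1 k f * f (S k) end.

Definition prob_dist (n : nat) (p : nat -> R) : Prop :=
  (forall i, (i < n)%nat -> 0 <= p i) /\ sumR n p = 1.

(* Shannon entropy (base 2), with the convention 0 log 0 = 0 *)
Definition xlog2x (x : R) : R := if Rlt_dec 0 x then x * log2 x else 0.
Definition entropy (n : nat) (p : nat -> R) : R := - sumR n (fun i => xlog2x (p i)).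

(* real polynomials: evaluation of coefficient list c_0 + c_1 x + ... *)
Fixpoint peval (c : list R) (x : R) : R :=
  match c with nil => 0 | a :: c' => a + x * peval c' x end.
Definition is_poly (f : R -> R) : Prop := exists c, forall x, f x = peval c x.
Definition is_even_poly (f : R -> R) : Prop :=
  is_poly f /\ forall x, f (- x) = f x.

Definition Bp (beta' : nat -> R -> R) (j : nat) (x : R) : R :=
  prod1 j (fun i => beta' i x).
Definition Bf (beta beta' : nat -> R -> R) (j : nat) (x : R) : R :=
  Bp beta' (j - 1) x * beta j x.

Definition v_k (n : nat) (p : nat -> R) (Sp beta beta' : nat -> R -> R) (k : nat) : R :=
  sumR n (fun i => p i * (Sp k (sqrt (p i)))^2 * (Bf beta beta' k (sqrt (p i)))^2
                   * log2 (/ phi (k + 1))).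

Definition v_est (n m : nat) (p : nat -> R) (Sp beta beta' : nat -> R -> R) : R :=
  -2 + sumR m (fun k => 8 * v_k n p Sp beta beta' (S k)).

Definition beta_hyp (m : nat) (delta : R) (beta beta' : nat -> R -> R) : Prop :=
  forall j, (1 <= j <= m)%nat -> forall x, 0 <= x <= 1 ->
    (beta j x)^2 + (beta' j x)^2 = 1 /\
    (x <= phi j -> (beta j x)^2 <= delta^2) /\
    (2 * phi j <= x -> (beta j x)^2 >= 1 - delta^2).

Definition S_hyp (m : nat) (eta : R) (S : nat -> R -> R) : Prop :=
  forall k, (1 <= k <= m)%nat ->
    is_even_poly (S k) /\
    (forall x, -1 <= x <= 1 -> Rabs (S k x) <= 1) /\
    (forall x, phi k <= x <= 1 ->
       Rabs (S k x - sqrt (log2 (2 / x)) / (2 * sqrt (log2 (/ phi (k + 1))))) <= eta).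

(* Write p_i = x^2.  Since -x^2 log2 (x^2) = 2 x^2 (log2 (2/x) - 1) and sum_i p_i = 1,
   v - H(p) is the sum over i of the errors
     sum_k 8 x^2 S_k(x)^2 B_k(x)^2 (k+1) - 2 x^2 log2 (2/x).
   For x < 2 phi_m every term is O(m^2 x) = O(m^2 2^-m).  Otherwise the B_k^2
   telescope to 1 - B'_m^2 with B'_m^2 <= delta^2, so up to O(m x^2 delta^2) the
   error is sum_k 8 x^2 B_k^2 ((k+1) S_k(x)^2 - log2 (2/x) / 4).  When x >= phi_k,
   S_k(x) is eta-close to sqrt (log2 (2/x) / (4 (k+1))), so the bracket is O(m eta);
   when x < phi_k the weight B_k^2 <= beta_k^2 <= delta^2.  Summing with the weights
   p_i gives O(m^2 (eta + m delta^2) + m^2 n 2^-m). *)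

From Stdlib Require Import Reals Lra Lia List.
Open Scope R_scope.

Lemma ln2_pos : 0 < ln 2.
Proof. generalize ln_lt_2; lra. Qed.

Lemma ln_le_ln x y : 0 < x -> x <= y -> ln x <= ln y.
Proof. intros Hx [Hxy | ->]; [left; apply ln_increasing |]; lra. Qed.

Lemma ln_lt_self y : 0 < y -> ln y < y.
Proof. intros Hy. generalize (exp_ineq1_le (ln y)). rewrite exp_ln by exact Hy. lra. Qed.

Lemma log2_le x y : 0 < x -> x <= y -> log2 x <= log2 y.
Proof.
  intros Hx Hxy. unfold log2, Rdiv. apply Rmult_le_compat_r.
  - left; apply Rinv_0_lt_compat, ln2_pos.
  - now apply ln_le_ln.
Qed.

Lemma log2_pow2 j : log2 (2 ^ j) = INR j.
Proof. unfold log2. rewrite ln_pow by lra. field. generalize ln2_pos; lra. Qed.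

Lemma log2_invphi j : log2 (/ phi j) = INR j.
Proof. unfold phi. rewrite Rinv_inv. apply log2_pow2. Qed.

Lemma phi_pos j : 0 < phi j.
Proof. apply Rinv_0_lt_compat, pow_lt; lra. Qed.

Lemma phi_S j : 2 * phi (S j) = phi j.
Proof. unfold phi. simpl pow. field. apply pow_nonzero; lra. Qed.

Lemma log2_2_div_ge1 x : 0 < x <= 1 -> 1 <= log2 (2 / x).
Proof.
  intros Hx. replace 1 with (log2 (2 ^ 1)) by (rewrite log2_pow2; reflexivity).
  apply log2_le; [lra |]. rewrite pow_1. unfold Rdiv.
  rewrite <- (Rmult_1_r 2) at 1. apply Rmult_le_compat_l; [lra |].
  rewrite <- Rinv_1. apply Rinv_le_contravar; lra.
Qed.

Lemma log2_2_div_le x j : 0 < x -> phi j <= x -> log2 (2 / x) <= INR j + 1.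
Proof.
  intros Hx Hj. rewrite <- S_INR, <- log2_pow2. apply log2_le.
  - apply Rdiv_lt_0_compat; lra.
  - simpl pow. unfold Rdiv. apply Rmult_le_compat_l; [lra |].
    rewrite <- (Rinv_inv (2 ^ j)). apply Rinv_le_contravar; [apply phi_pos | exact Hj].
Qed.

Lemma log2_invphi_bounds m k : (k < m)%nat -> 2 <= log2 (/ phi (S k + 1)) <= INR m + 1.
Proof.
  intros Hk. rewrite log2_invphi, plus_INR, S_INR. simpl INR.
  assert (INR (S k) <= INR m) by (apply le_INR; lia).
  rewrite S_INR in *. generalize (pos_INR k). lra.
Qed.

Lemma log2_succ_ge1 n : (1 <= n)%nat -> 1 <= log2 (INR n + 1).
Proof.
  intros Hn. rewrite <- (log2_pow2 1) at 1. rewrite pow_1. apply log2_le; [lra |].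
  assert (1 <= INR n) by (apply (le_INR 1); lia). lra.
Qed.

Lemma Rabs_sq_mul_sub_le s l K e :
  0 < K -> 0 <= l <= K -> Rabs s <= 1 -> Rabs (s - sqrt l / (2 * sqrt K)) <= e ->
  Rabs (s ^ 2 * K - l / 4) <= 3 / 2 * K * e.
Proof.
  intros HK Hl Hs He. set (t := sqrt l / (2 * sqrt K)) in He.
  assert (HsK : 0 < sqrt K) by (apply sqrt_lt_R0; lra).
  assert (Ht0 : 0 <= t) by (apply Rmult_le_pos; [apply sqrt_pos | left; apply Rinv_0_lt_compat; lra]).
  assert (Ht2 : l / 4 = K * t ^ 2).
  { unfold t, Rdiv. rewrite Rpow_mult_distr, pow_inv, Rpow_mult_distr, !pow2_sqrt by lra.
    field. lra. }
  assert (Ht1 : t <= 1 / 2).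
  { assert (t ^ 2 <= 1 / 4) by (apply Rmult_le_reg_l with K; lra). nra. }
  assert (Hsum : Rabs (s + t) <= 3 / 2).
  { eapply Rle_trans; [apply Rabs_triang | rewrite (Rabs_right t); lra]. }
  rewrite Ht2. replace (s ^ 2 * K - K * t ^ 2) with (K * ((s - t) * (s + t))) by ring.
  rewrite !Rabs_mult, (Rabs_right K) by lra.
  assert (Rabs (s - t) * Rabs (s + t) <= e * (3 / 2))
    by (apply Rmult_le_compat; try apply Rabs_pos; lra).
  nra.
Qed.

Lemma xlog2x_sq x : 0 < x -> xlog2x (x ^ 2) = 2 * x ^ 2 - 2 * x ^ 2 * log2 (2 / x).
Proof.
  intros Hx. unfold xlog2x.
  destruct (Rlt_dec 0 (x ^ 2)) as [_ | Hn]; [| exfalso; apply Hn, pow_lt; lra].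
  unfold log2, Rdiv. rewrite ln_pow, ln_mult, ln_Rinv by (try apply Rinv_0_lt_compat; lra).
  replace (INR 2) with 2 by (simpl; lra). field. generalize ln2_pos; lra.
Qed.

Lemma Rabs_xlog2x_sq_le x : 0 <= x <= 1 -> Rabs (xlog2x (x ^ 2)) <= 4 * x.
Proof.
  intros Hx. unfold xlog2x.
  destruct (Rlt_dec 0 (x ^ 2)) as [Hpos | _]; [| rewrite Rabs_R0; lra].
  assert (Hx0 : 0 < x) by (destruct (Req_dec x 0) as [-> | ]; [simpl in Hpos |]; lra).
  assert (Hln : ln x <= 0) by (rewrite <- ln_1; apply ln_le_ln; lra).
  (* [x * (- ln x) <= 1] since [- ln x = ln (/ x) < / x] *)
  assert (Hxln : x * - ln x <= 1).
  { rewrite <- ln_Rinv by exact Hx0.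
    assert (H := ln_lt_self (/ x) (Rinv_0_lt_compat x Hx0)).
    replace 1 with (x * / x) by (field; lra). apply Rmult_le_compat_l; lra. }
  generalize ln_lt_2; intros Hl2.
  unfold log2. rewrite ln_pow by exact Hx0. replace (INR 2) with 2 by (simpl; lra).
  replace (x ^ 2 * (2 * ln x / ln 2)) with (- (2 * x * (x * - ln x) / ln 2)) by (field; lra).
  rewrite Rabs_Ropp, Rabs_right.
  - apply Rmult_le_reg_r with (ln 2); [lra |]. unfold Rdiv.
    rewrite Rmult_assoc, Rinv_l by lra. nra.
  - apply Rle_ge, Rmult_le_pos; [nra | left; apply Rinv_0_lt_compat; lra].
Qed.

Lemma sumR_ext n f g : (forall i, (i < n)%nat -> f i = g i) -> sumR n f = sumR n g.
Proof. induction n as [| n IH]; simpl; intros H; [reflexivity |]. rewrite IH, H; auto. Qed.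

Lemma sumR_le n f g : (forall i, (i < n)%nat -> f i <= g i) -> sumR n f <= sumR n g.
Proof. induction n as [| n IH]; simpl; intros H; [lra |]. apply Rplus_le_compat; auto. Qed.

Lemma sumR_nonneg n f : (forall i, (i < n)%nat -> 0 <= f i) -> 0 <= sumR n f.
Proof.
  intros H. replace 0 with (sumR n (fun _ => 0)).
  - now apply sumR_le.
  - induction n as [| n IH]; simpl; [reflexivity |]. rewrite IH; [lra | auto].
Qed.

Lemma Rabs_sumR_le n f : Rabs (sumR n f) <= sumR n (fun i => Rabs (f i)).
Proof.
  induction n as [| n IH]; simpl; [rewrite Rabs_R0; lra |].
  eapply Rle_trans; [apply Rabs_triang | lra].
Qed.

Lemma sumR_const n c : sumR n (fun _ => c) = INR n * c.
Proof. induction n as [| n IH]; simpl sumR; [simpl; lra |]. rewrite IH, S_INR; lra. Qed.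

Lemma sumR_plus n f g : sumR n (fun i => f i + g i) = sumR n f + sumR n g.
Proof. induction n as [| n IH]; simpl; [lra |]. rewrite IH; lra. Qed.

Lemma sumR_scal n c f : sumR n (fun i => c * f i) = c * sumR n f.
Proof. induction n as [| n IH]; simpl; [lra |]. rewrite IH; lra. Qed.

Lemma sumR_swap n m (f : nat -> nat -> R) :
  sumR n (fun i => sumR m (fun k => f i k)) = sumR m (fun k => sumR n (fun i => f i k)).
Proof.
  induction n as [| n IH]; simpl.
  - induction m as [| m IHm]; simpl; lra.
  - rewrite IH. now rewrite <- sumR_plus.
Qed.

Lemma sumR_term_le n f i :
  (forall j, (j < n)%nat -> 0 <= f j) -> (i < n)%nat -> f i <= sumR n f.
Proof.
  induction n as [| n IH]; simpl; intros H Hi; [lia |].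
  assert (Hn : 0 <= f n) by auto.
  destruct (Nat.eq_dec i n) as [-> | Hin].
  - assert (0 <= sumR n f) by (apply sumR_nonneg; auto). lra.
  - assert (f i <= sumR n f) by (apply IH; auto; lia). lra.
Qed.

Section Bproducts.
Variables (m : nat) (delta : R) (beta beta' : nat -> R -> R) (x : R).
Hypothesis Hbeta : beta_hyp m delta beta beta'.
Hypothesis Hx : 0 <= x <= 1.

Lemma beta'_sq j : (1 <= j <= m)%nat -> beta' j x ^ 2 = 1 - beta j x ^ 2.
Proof. intros Hj. destruct (Hbeta j Hj x Hx) as [H _]. lra. Qed.

Lemma beta_sq_le1 j : (1 <= j <= m)%nat -> beta j x ^ 2 <= 1.
Proof. intros Hj. generalize (beta'_sq j Hj) (pow2_ge_0 (beta' j x)). lra. Qed.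

Lemma Bp_S j : Bp beta' (S j) x = Bp beta' j x * beta' (S j) x.
Proof. reflexivity. Qed.

Lemma Bp_sq_le1 j : (j <= m)%nat -> Bp beta' j x ^ 2 <= 1.
Proof.
  induction j as [| j IH]; intros Hj; [unfold Bp; simpl; lra |].
  rewrite Bp_S, Rpow_mult_distr.
  assert (H1 := IH ltac:(lia)). assert (H2 := pow2_ge_0 (Bp beta' j x)).
  rewrite beta'_sq by lia. generalize (pow2_ge_0 (beta (S j) x)). nra.
Qed.

Lemma Bf_sq_le_beta_sq k : (1 <= k <= m)%nat -> Bf beta beta' k x ^ 2 <= beta k x ^ 2.
Proof.
  intros Hk. unfold Bf. rewrite Rpow_mult_distr.
  assert (H := Bp_sq_le1 (k - 1) ltac:(lia)). generalize (pow2_ge_0 (beta k x)). nra.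
Qed.

Lemma Bf_sq_le1 k : (1 <= k <= m)%nat -> Bf beta beta' k x ^ 2 <= 1.
Proof. intros Hk. generalize (Bf_sq_le_beta_sq k Hk) (beta_sq_le1 k Hk). lra. Qed.

Lemma Bf_sq_le_delta_sq k : (1 <= k <= m)%nat -> x <= phi k -> Bf beta beta' k x ^ 2 <= delta ^ 2.
Proof.
  intros Hk Hxk. destruct (Hbeta k Hk x Hx) as [_ [H _]].
  generalize (Bf_sq_le_beta_sq k Hk) (H Hxk). lra.
Qed.

Lemma Bp_sq_le_delta_sq j : (1 <= j <= m)%nat -> 2 * phi j <= x -> Bp beta' j x ^ 2 <= delta ^ 2.
Proof.
  intros Hj Hxj. destruct j as [| j]; [lia |].
  destruct (Hbeta (S j) Hj x Hx) as [_ [_ H]].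
  rewrite Bp_S, Rpow_mult_distr, beta'_sq by exact Hj.
  assert (H1 := Bp_sq_le1 j ltac:(lia)). assert (H2 := pow2_ge_0 (Bp beta' j x)).
  generalize (H Hxj) (beta_sq_le1 (S j) Hj). nra.
Qed.

(* The squares [B_k^2] telescope because [B_k^2 = B'_{k-1}^2 - B'_k^2]. *)
Lemma sumR_Bf_sq j : (j <= m)%nat ->
  sumR j (fun k => Bf beta beta' (S k) x ^ 2) = 1 - Bp beta' j x ^ 2.
Proof.
  induction j as [| j IH]; intros Hj; [unfold Bp; simpl; lra |].
  change (sumR j (fun k => Bf beta beta' (S k) x ^ 2) + Bf beta beta' (S j) x ^ 2
          = 1 - Bp beta' (S j) x ^ 2).
  rewrite IH by lia. unfold Bf. replace (S j - 1)%nat with j by lia.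
  rewrite Bp_S, !Rpow_mult_distr, beta'_sq by lia. ring.
Qed.

End Bproducts.

Definition v_point (m : nat) (Sp beta beta' : nat -> R -> R) (x : R) : R :=
  sumR m (fun k => 8 * (x ^ 2 * Sp (S k) x ^ 2 * Bf beta beta' (S k) x ^ 2
                        * log2 (/ phi (S k + 1)))).

Section Pointwise.
Variables (m : nat) (delta eta : R) (beta beta' Sp : nat -> R -> R).
Hypothesis Hm : (1 <= m)%nat.
Hypothesis Hbeta : beta_hyp m delta beta beta'.
Hypothesis HS : S_hyp m eta Sp.

Lemma Sp_sq_le1 k x : (1 <= k <= m)%nat -> -1 <= x <= 1 -> Sp k x ^ 2 <= 1.
Proof.
  intros Hk Hx. destruct (HS k Hk) as [_ [H _]].
  rewrite <- pow2_abs. generalize (H x Hx) (Rabs_pos (Sp k x)). nra.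
Qed.

Lemma v_point_bounds x : 0 <= x <= 1 ->
  0 <= v_point m Sp beta beta' x <= 8 * INR m * (INR m + 1) * x ^ 2.
Proof.
  intros Hx.
  assert (Hterm : forall k, (k < m)%nat ->
    0 <= 8 * (x ^ 2 * Sp (S k) x ^ 2 * Bf beta beta' (S k) x ^ 2 * log2 (/ phi (S k + 1)))
      <= 8 * (INR m + 1) * x ^ 2).
  { intros k Hk.
    assert (HSk := Sp_sq_le1 (S k) x ltac:(lia) ltac:(lra)).
    assert (HBk := Bf_sq_le1 m delta beta beta' x Hbeta Hx (S k) ltac:(lia)).
    assert (HK := log2_invphi_bounds m k Hk).
    generalize (pow2_ge_0 x) (pow2_ge_0 (Sp (S k) x)) (pow2_ge_0 (Bf beta beta' (S k) x)).
    set (a := x ^ 2) in *. set (s := Sp (S k) x ^ 2) in *.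
    set (b := Bf beta beta' (S k) x ^ 2) in *. set (K := log2 (/ phi (S k + 1))) in *.
    intros. assert (0 <= a * s <= a) by nra. assert (0 <= a * s * b <= a) by nra.
    split; nra. }
  unfold v_point. split.
  - apply sumR_nonneg. intros k Hk. apply Hterm, Hk.
  - replace (8 * INR m * (INR m + 1) * x ^ 2) with (INR m * (8 * (INR m + 1) * x ^ 2)) by ring.
    rewrite <- sumR_const. apply sumR_le. intros k Hk. apply Hterm, Hk.
Qed.

Lemma eta_nonneg : 0 <= eta.
Proof.
  destruct (HS m ltac:(lia)) as [_ [_ Happrox]].
  assert (Hphi : phi m <= 1).
  { unfold phi. rewrite <- Rinv_1. apply Rinv_le_contravar; [lra |]. apply pow_R1_Rle; lra. }
  generalize (Happrox 1 ltac:(lra)) (Rabs_pos (Sp m 1 - sqrt (log2 (2 / 1)) / (2 * sqrt (log2 (/ phi (m + 1)))))).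
  lra.
Qed.

Lemma v_point_err_small x : 0 <= x <= 1 -> x < 2 * phi m ->
  Rabs (v_point m Sp beta beta' x - 2 * x ^ 2 + xlog2x (x ^ 2))
    <= 16 * (INR m + 1) ^ 2 / 2 ^ m.
Proof.
  intros Hx Hxm. unfold phi in Hxm.
  destruct (v_point_bounds x Hx) as [Hv0 Hv1].
  assert (Hxl := Rabs_xlog2x_sq_le x Hx).
  assert (HM : 1 <= INR m) by (apply (le_INR 1); lia).
  assert (Hx2 : 0 <= x ^ 2 <= x) by nra.
  set (c := 8 * INR m * (INR m + 1) + 6).
  assert (Hdiff : Rabs (v_point m Sp beta beta' x - 2 * x ^ 2) <= (c - 4) * x).
  { apply Rabs_le. unfold c. split; nra. }
  assert (Hinv : 0 < / 2 ^ m) by (apply Rinv_0_lt_compat, pow_lt; lra).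
  assert (Hc : x * c <= 2 * / 2 ^ m * c) by (apply Rmult_le_compat_r; unfold c; nra).
  eapply Rle_trans; [apply Rabs_triang |]. unfold Rdiv. unfold c in *. nra.
Qed.

Lemma Bf_sq_dev_le x k : 0 < x <= 1 -> (k < m)%nat -> log2 (2 / x) <= INR m ->
  Bf beta beta' (S k) x ^ 2
    * Rabs (Sp (S k) x ^ 2 * log2 (/ phi (S k + 1)) - log2 (2 / x) / 4)
    <= 2 * (INR m + 1) * (eta + delta ^ 2).
Proof.
  intros Hx Hk HlM.
  assert (Hx' : 0 <= x <= 1) by lra.
  assert (HK := log2_invphi_bounds m k Hk).
  assert (Hl1 := log2_2_div_ge1 x Hx).
  assert (HB0 := pow2_ge_0 (Bf beta beta' (S k) x)).
  assert (HB1 := Bf_sq_le1 m delta beta beta' x Hbeta Hx' (S k) ltac:(lia)).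
  assert (Hd := pow2_ge_0 delta).
  assert (Heta := eta_nonneg).
  destruct (HS (S k) ltac:(lia)) as [_ [Habs Happrox]].
  destruct (Rle_lt_dec (phi (S k)) x) as [Hclose | Hfar].
  - assert (HlK : log2 (2 / x) <= log2 (/ phi (S k + 1))).
    { rewrite log2_invphi, plus_INR. apply log2_2_div_le; lra. }
    assert (Hdev := Rabs_sq_mul_sub_le (Sp (S k) x) (log2 (2 / x)) (log2 (/ phi (S k + 1))) eta
                      ltac:(lra) ltac:(lra) (Habs x ltac:(lra)) (Happrox x ltac:(lra))).
    set (D := Rabs _) in *. set (K := log2 (/ phi (S k + 1))) in *.
    assert (HD0 : 0 <= D) by apply Rabs_pos.
    assert (HDe : D <= 3 / 2 * (INR m + 1) * eta).
    { eapply Rle_trans; [exact Hdev |]. apply Rmult_le_compat_r; lra. }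
    nra.
  - assert (HBd := Bf_sq_le_delta_sq m delta beta beta' x Hbeta Hx' (S k) ltac:(lia) ltac:(lra)).
    assert (HSk := Sp_sq_le1 (S k) x ltac:(lia) ltac:(lra)).
    assert (HS0 := pow2_ge_0 (Sp (S k) x)).
    set (K := log2 (/ phi (S k + 1))) in *.
    assert (HD : Rabs (Sp (S k) x ^ 2 * K - log2 (2 / x) / 4) <= INR m + 1)
      by (apply Rabs_le; split; nra).
    assert (HD0 := Rabs_pos (Sp (S k) x ^ 2 * K - log2 (2 / x) / 4)).
    nra.
Qed.

Lemma v_point_err_big x : 0 <= x <= 1 -> 2 * phi m <= x ->
  Rabs (v_point m Sp beta beta' x - 2 * x ^ 2 + xlog2x (x ^ 2))
    <= 16 * (INR m + 1) ^ 2 * ((eta + INR m * delta ^ 2) * x ^ 2).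
Proof.
  intros Hx Hxm.
  assert (Hx0 : 0 < x) by (generalize (phi_pos m); lra).
  set (l := log2 (2 / x)).
  assert (Hl1 : 1 <= l) by (apply log2_2_div_ge1; lra).
  assert (HlM : l <= INR m).
  { replace (INR m) with (INR (m - 1) + 1) by (rewrite <- S_INR; f_equal; lia).
    apply log2_2_div_le; [exact Hx0 |].
    rewrite <- phi_S. replace (S (m - 1)) with m by lia. exact Hxm. }
  set (D := fun k => Sp (S k) x ^ 2 * log2 (/ phi (S k + 1)) - l / 4).
  set (G := sumR m (fun k => 8 * x ^ 2 * (Bf beta beta' (S k) x ^ 2 * D k))).
  (* Weighting [l/4] by the telescoping sum of the [B_k^2] leaves only [B'_m^2], which is small. *)
  assert (Herr : v_point m Sp beta beta' x - 2 * x ^ 2 + xlog2x (x ^ 2)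
                 = G - 2 * x ^ 2 * l * Bp beta' m x ^ 2).
  { assert (Hsplit : v_point m Sp beta beta' x
                     = G + 2 * x ^ 2 * l * sumR m (fun k => Bf beta beta' (S k) x ^ 2)).
    { unfold G. rewrite <- sumR_scal, <- sumR_plus. apply sumR_ext. intros k _. unfold D. field. }
    rewrite Hsplit, (sumR_Bf_sq m delta beta beta' x Hbeta Hx m (le_n m)), xlog2x_sq by exact Hx0.
    fold l. ring. }
  rewrite Herr.
  assert (HM : 1 <= INR m) by (apply (le_INR 1); lia).
  assert (Hd := pow2_ge_0 delta). assert (Heta := eta_nonneg).
  assert (Hx2 := pow2_ge_0 x).
  assert (HG : Rabs G <= INR m * (16 * x ^ 2 * (INR m + 1) * (eta + delta ^ 2))).
  { unfold G. eapply Rle_trans; [apply Rabs_sumR_le |].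
    rewrite <- sumR_const. apply sumR_le. intros k Hk.
    rewrite Rabs_mult, (Rabs_right (8 * x ^ 2)) by lra.
    rewrite Rabs_mult, (Rabs_right (Bf _ _ _ _ ^ 2)) by (apply Rle_ge, pow2_ge_0).
    replace (16 * x ^ 2 * (INR m + 1) * (eta + delta ^ 2))
      with (8 * x ^ 2 * (2 * (INR m + 1) * (eta + delta ^ 2))) by ring.
    apply Rmult_le_compat_l; [lra |]. exact (Bf_sq_dev_le x k ltac:(lra) Hk HlM). }
  assert (HBp := Bp_sq_le_delta_sq m delta beta beta' x Hbeta Hx m ltac:(lia) Hxm).
  assert (HBp0 := pow2_ge_0 (Bp beta' m x)).
  assert (Hlast : 0 <= 2 * x ^ 2 * l * Bp beta' m x ^ 2 <= 2 * x ^ 2 * INR m * delta ^ 2).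
  { assert (0 <= x ^ 2 * l <= x ^ 2 * INR m) by nra. nra. }
  eapply Rle_trans; [apply Rabs_triang |].
  rewrite Rabs_Ropp, (Rabs_right (2 * x ^ 2 * l * Bp beta' m x ^ 2)) by lra.
  assert (0 <= x ^ 2 * (INR m + 1) * eta) by (apply Rmult_le_pos; nra).
  assert (0 <= x ^ 2 * delta ^ 2 * INR m * (16 * (INR m + 1) ^ 2 - 16 * (INR m + 1) - 2))
    by (apply Rmult_le_pos; nra).
  nra.
Qed.

Lemma v_point_err_le x : 0 <= x <= 1 ->
  Rabs (v_point m Sp beta beta' x - 2 * x ^ 2 + xlog2x (x ^ 2))
    <= 16 * (INR m + 1) ^ 2 * ((eta + INR m * delta ^ 2) * x ^ 2 + / 2 ^ m).
Proof.
  intros Hx. rewrite Rmult_plus_distr_l.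
  assert (Hd := pow2_ge_0 delta). assert (Heta := eta_nonneg).
  assert (0 <= 16 * (INR m + 1) ^ 2 * ((eta + INR m * delta ^ 2) * x ^ 2)).
  { generalize (pos_INR m) (pow2_ge_0 x). intros. repeat apply Rmult_le_pos; nra. }
  assert (0 <= 16 * (INR m + 1) ^ 2 * / 2 ^ m).
  { generalize (pos_INR m). intros. apply Rmult_le_pos; [nra | left; apply Rinv_0_lt_compat, pow_lt; lra]. }
  destruct (Rlt_le_dec x (2 * phi m)) as [Hsmall | Hbig].
  - generalize (v_point_err_small x Hx Hsmall). unfold Rdiv. lra.
  - generalize (v_point_err_big x Hx Hbig). lra.
Qed.

End Pointwise.

Lemma v_est_sub_entropy n m p Sp beta beta' : prob_dist n p ->
  v_est n m p Sp beta beta' - entropy n p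
  = sumR n (fun i => v_point m Sp beta beta' (sqrt (p i)) - 2 * p i + xlog2x (p i)).
Proof.
  intros [Hp0 Hp1].
  rewrite (sumR_ext n (fun i => v_point m Sp beta beta' (sqrt (p i)) - 2 * p i + xlog2x (p i))
                      (fun i => v_point m Sp beta beta' (sqrt (p i)) + -2 * p i + xlog2x (p i)))
    by (intros; ring).
  rewrite !sumR_plus, (sumR_scal n (-2) p), Hp1.
  unfold v_est, entropy, v_point. rewrite sumR_swap.
  enough (Hv : forall k, (k < m)%nat ->
            sumR n (fun i => 8 * (sqrt (p i) ^ 2 * Sp (S k) (sqrt (p i)) ^ 2
                                  * Bf beta beta' (S k) (sqrt (p i)) ^ 2 * log2 (/ phi (S k + 1))))
            = 8 * v_k n p Sp beta beta' (S k))
    by (rewrite (sumR_ext _ _ _ Hv); ring).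
  intros k _. rewrite sumR_scal. unfold v_k. f_equal. apply sumR_ext.
  intros i Hi. rewrite pow2_sqrt by auto. reflexivity.
Qed.

Lemma Rabs_v_est_sub_entropy_le n m p delta eta beta beta' Sp :
  (1 <= m)%nat -> prob_dist n p -> beta_hyp m delta beta beta' -> S_hyp m eta Sp ->
  Rabs (v_est n m p Sp beta beta' - entropy n p)
    <= 16 * (INR m + 1) ^ 2 * (INR m * delta ^ 2 + eta + INR n / 2 ^ m).
Proof.
  intros Hm Hp Hbeta HS.
  rewrite (v_est_sub_entropy n m p Sp beta beta' Hp).
  destruct Hp as [Hp0 Hp1].
  set (E := eta + INR m * delta ^ 2).
  eapply Rle_trans; [apply Rabs_sumR_le |].
  eapply Rle_trans.
  { apply sumR_le with (g := fun i => 16 * (INR m + 1) ^ 2 * (E * p i + / 2 ^ m)).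
    intros i Hi.
    assert (Hpi : p i <= 1) by (rewrite <- Hp1; apply sumR_term_le; auto).
    assert (Hsqrt : 0 <= sqrt (p i) <= 1).
    { split; [apply sqrt_pos |]. rewrite <- sqrt_1. apply sqrt_le_1_alt, Hpi. }
    assert (Hpx : p i = sqrt (p i) ^ 2) by (rewrite pow2_sqrt; auto).
    set (x := sqrt (p i)) in *. rewrite Hpx.
    apply (v_point_err_le m delta eta beta beta' Sp Hm Hbeta HS x Hsqrt). }
  rewrite sumR_scal, sumR_plus, sumR_scal, sumR_const, Hp1.
  right. unfold E, Rdiv. ring.
Qed.

Theorem theorem3 :
  exists (C : R) (c : nat), 0 < C /\
  forall (n : nat) (p : nat -> R) (m : nat) (delta eta : R)
         (beta beta' S : nat -> R -> R),
    (1 <= n)%nat -> prob_dist n p -> (2 <= m)%nat -> 0 < delta -> 0 < eta ->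
    beta_hyp m delta beta beta' ->
    S_hyp m eta S ->
    Rabs (v_est n m p S beta beta' - entropy n p)
      <= C * (INR m + log2 (INR n + 1)) ^ c
           * (INR m * delta ^ 2 + eta + INR n / 2 ^ m).
Proof.
  exists 16, 2%nat. split; [lra |].
  intros n p m delta eta beta beta' Sp Hn Hp Hm _ Heta Hbeta HS.
  eapply Rle_trans; [apply (Rabs_v_est_sub_entropy_le n m p delta eta beta beta' Sp); auto; lia |].
  apply Rmult_le_compat_r.
  - assert (0 <= INR n / 2 ^ m)
      by (apply Rmult_le_pos; [apply pos_INR | left; apply Rinv_0_lt_compat, pow_lt; lra]).
    generalize (pos_INR m) (pow2_ge_0 delta). intros. nra.
  - assert (Hlog := log2_succ_ge1 n Hn). generalize (pos_INR m). intros. nra.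
Qed.
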